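(* (i) Let $q$ be a power of an odd prime and let $\mathfrak{C}/\mathbb{F}_q$ be the genus $2$ hyperelliptic curve $y^2=x^5+x^3+tx$ with $t\in\mathbb{F}_q\setminus\{0,1/4,9/100\}$. If $4\mid q-1$ and $t$ has a fourth root $t^{1/4}\in\mathbb{F}_q$, then $\mathrm{Aut}(\mathfrak{C}/\mathbb{F}_q)\simeq D_8$. (ii) Let $q$ be a power of an odd prime $p\neq 3$ and let $\mathfrak{C}/\mathbb{F}_q$ be the genus $2$ hyperelliptic curve $y^2=x^6+x^3+t$ with $t\in\mathbb{F}_q\setminus\{0,1/4,-1/50\}$. If $3\mid q-1$ and $t$ has a sixth root $t^{1/6}\in\mathbb{F}_q$, then $\mathrm{Aut}(\mathfrak{C}/\mathbb{F}_q)\simeq D_{12}$.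
   Context: For a genus $2$ curve $\mathfrak{C}:y^2=f(x)$ over $\mathbb{F}_q$ ($q$ odd), automorphisms of $\mathfrak{C}$ over $\overline{\mathbb{F}}_q$ correspond to matrices $M=\begin{pmatrix}a&b\\c&d\end{pmatrix}\in\mathrm{GL}_2(\overline{\mathbb{F}}_q)$ acting by $x\mapsto \frac{ax+b}{cx+d}$, $y\mapsto \frac{(ad-bc)y}{(cx+d)^3}$ (and preserving the curve). $\mathrm{Aut}(\mathfrak{C})$ denotes the full automorphism group over $\overline{\mathbb{F}}_q$ (including the hyperelliptic involution $y\mapsto -y$, corresponding to $-I$), and $\mathrm{Aut}(\mathfrak{C}/\mathbb{F}_q)$ its subgroup of automorphisms defined over $\mathbb{F}_q$, i.e. whose matrix has entries in $\mathbb{F}_q$. $D_n$ denotes the dihedral group of order $n$. *)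

From HB Require Import structures.
From mathcomp Require Import all_boot all_order all_algebra all_fingroup all_solvable all_field.
Set Implicit Arguments. Unset Strict Implicit. Unset Printing Implicit Defensive.
Import GRing.Theory.
Local Open Scope ring_scope.

(* Genus 2 curve y^2 = f(x) with deg f <= 6.  A matrix M = [[a,b],[c,d]]
   acts by x |-> (a x + b)/(c x + d), y |-> det(M) y / (c x + d)^3.
   This preserves the curve iff
     (c x + d)^6 f((a x + b)/(c x + d)) = det(M)^2 f(x),
   where the left-hand side is the polynomial below. *)
Definition act_poly (F : fieldType) (M : 'M[F]_2) (f : {poly F}) : {poly F} :=
  \sum_(i < 7) f`_i *: (('X * (M 0 0)%:P + (M 0 1)%:P) ^+ i
                       * ('X * (M 1 0)%:P + (M 1 1)%:P) ^+ (6 - i)).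

Definition aut_set (F : finFieldType) (f : {poly F}) : {set {'GL_2[F]}} :=
  [set u : {'GL_2[F]} | act_poly (GLval u) f == (\det (GLval u)) ^+ 2 *: f].

From HB Require Import structures.
From mathcomp Require Import all_boot all_order all_algebra all_fingroup all_solvable all_field.
From mathcomp Require Import ring.
Import GRing.Theory.
Local Open Scope ring_scope.
Set Implicit Arguments. Unset Strict Implicit. Unset Printing Implicit Defensive.

(* An F_q-automorphism is a matrix [[a, b], [c, d]] with
   (c x + d)^6 f((a x + b)/(c x + d)) = (a d - b c)^2 f(x), a polynomial system in a, b, c, d
   obtained by comparing the seven coefficients.  When c = 0 or a = 0 it forces the matrix to be
   diag(a, a^-1) with a^n = 1 or [[0, b], [b^-1, 0]] with (s/b)^n = 1, where n = 4 (resp. 6) and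
   s^n = t.  When a and c are both nonzero, the ratios a/c and b/d are images of branch points
   and must satisfy further polynomial relations; eliminating them leaves a polynomial in t
   vanishing only at the excluded values, so no such automorphism exists.  With z a primitive
   n-th root of unity, the remaining matrices are generated by the involutions
   [[0, s], [s^-1, 0]] and [[0, s/z], [z/s, 0]], whose product diag(z, z^-1) has order n:
   the group is dihedral of order 2n. *)

Lemma mulf_eq0_left (F : fieldType) (x y : F) : x * y = 0 -> y != 0 -> x = 0.
Proof. by move/eqP; rewrite mulf_eq0 => /orP[/eqP//|/eqP->]; rewrite eqxx. Qed.

Lemma mulf_eq0_right (F : fieldType) (x y : F) : x * y = 0 -> x != 0 -> y = 0.
Proof. by move/eqP; rewrite mulf_eq0 => /orP[/eqP->|/eqP//]; rewrite eqxx. Qed.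

Lemma eq0_of_eq (R : zmodType) (x y z : R) : y = z -> x = y - z -> x = 0.
Proof. by move=> -> ->; rewrite subrr. Qed.

Lemma eq0_of_comb (R : comNzRingType) (j k x y y' z : R) :
  y = y' -> z = 0 -> x = j * (y - y') + k * z -> x = 0.
Proof. by move=> -> -> ->; rewrite subrr !mulr0 addr0. Qed.

Lemma natr3_natr5_eq0F (R : comNzRingType) : 3%:R = 0 :> R -> 5%:R = 0 :> R -> False.
Proof.
move=> h3 h5; have : (1 : R) = 2%:R * 3%:R - 5%:R by ring.
by rewrite h5 h3 mulr0 subr0; apply/eqP; rewrite oner_eq0.
Qed.

Lemma mulr_subr_neq0 (F : fieldType) (k m t : F) :
  k != 0 \/ m != 0 -> t != m / k -> k * t - m != 0.
Proof.
move=> km tmk; have [k0|k0] := eqVneq k 0.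
  by move: km; rewrite k0 mul0r sub0r oppr_eq0 eqxx => -[].
apply: contra_neq tmk => h; apply: (mulfI k0); rewrite mulrCA mulfV // mulr1.
by apply/eqP; rewrite -subr_eq0 h.
Qed.

Ltac nonzero := repeat (apply: mulf_neq0 || apply: expf_neq0); try done.

Definition mk2 (R : nzRingType) (a b c d : R) : 'M[R]_2 :=
  \matrix_(i, j) if i == 0 then (if j == 0 then a else b) else (if j == 0 then c else d).

Lemma mk2E (R : nzRingType) (a b c d : R) :
  (mk2 a b c d 0 0 = a) * (mk2 a b c d 0 1 = b) * (mk2 a b c d 1 0 = c) * (mk2 a b c d 1 1 = d).
Proof. by rewrite !mxE. Qed.

Lemma mx2_eta (R : nzRingType) (M : 'M[R]_2) : M = mk2 (M 0 0) (M 0 1) (M 1 0) (M 1 1).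
Proof.
apply/matrixP => i j; rewrite !mxE.
by case: i => [[|[|i]] Hi] //; case: j => [[|[|j]] Hj] //=; congr (M _ _); apply: val_inj.
Qed.

Lemma mk2_1 (R : nzRingType) : mk2 1 0 0 1 = 1 :> 'M[R]_2.
Proof.
apply/matrixP => i j; rewrite !mxE.
by case: i => [[|[|i]] Hi] //; case: j => [[|[|j]] Hj].
Qed.

Lemma mul_mk2 (R : nzRingType) (a b c d a' b' c' d' : R) :
  mk2 a b c d * mk2 a' b' c' d' =
  mk2 (a * a' + b * c') (a * b' + b * d') (c * a' + d * c') (c * b' + d * d').
Proof.
rewrite -mulmxE; apply/matrixP => i j; rewrite !mxE !big_ord_recr big_ord0 /= !mxE /=.
by case: i => [[|[|i]] Hi] //; case: j => [[|[|j]] Hj] //=; rewrite add0r.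
Qed.

Lemma det_mk2 (R : comNzRingType) (a b c d : R) : \det (mk2 a b c d) = a * d - b * c.
Proof.
rewrite (expand_det_row _ 0) !big_ord_recr big_ord0 /= add0r /cofactor !det_mx11 !mxE /=.
by rewrite expr0 expr1 mul1r mulN1r; ring.
Qed.

Lemma det_mx2 (R : comNzRingType) (M : 'M[R]_2) : \det M = M 0 0 * M 1 1 - M 0 1 * M 1 0.
Proof. by rewrite {1}(mx2_eta M) det_mk2. Qed.

Lemma aut_setP (F : finFieldType) (f : {poly F}) (es fs : seq F) (u : {'GL_2[F]}) :
  act_poly (GLval u) f = Poly es -> f = Poly fs ->
  reflect (forall j, es`_j = (\det (GLval u)) ^+ 2 * fs`_j) (u \in aut_set f).
Proof.
move=> hA hf; rewrite inE hA hf; apply: (iffP eqP) => [H j | H].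
  by have := congr1 (fun p : {poly F} => p`_j) H; rewrite /= coefZ !coef_Poly.
by apply/polyP => j; rewrite coefZ !coef_Poly.
Qed.

Definition dihedral_form (F : fieldType) (n : nat) (s : F) (M : 'M[F]_2) : Prop :=
  (M 0 1 = 0 /\ M 1 0 = 0 /\ M 0 0 * M 1 1 = 1 /\ M 0 0 ^+ n = 1) \/
  (M 0 0 = 0 /\ M 1 1 = 0 /\ M 0 1 * M 1 0 = 1 /\ (M 1 0 * s) ^+ n = 1).

Definition quintic_coefs (R : nzRingType) (t a b c d : R) : seq R :=
 [:: b^+5*d + b^+3*d^+3 + b*d^+5*t ;
   5%:R*a*b^+4*d + 3%:R*a*b^+2*d^+3 + a*d^+5*t + b^+5*c + 3%:R*b^+3*c*d^+2 + 5%:R*b*c*d^+4*t ;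
   10%:R*a^+2*b^+3*d + 3%:R*a^+2*b*d^+3 + 5%:R*a*b^+4*c + 9%:R*a*b^+2*c*d^+2 + 5%:R*a*c*d^+4*t
     + 3%:R*b^+3*c^+2*d + 10%:R*b*c^+2*d^+3*t ;
   10%:R*a^+3*b^+2*d + a^+3*d^+3 + 10%:R*a^+2*b^+3*c + 9%:R*a^+2*b*c*d^+2 + 9%:R*a*b^+2*c^+2*d
     + 10%:R*a*c^+2*d^+3*t + b^+3*c^+3 + 10%:R*b*c^+3*d^+2*t ;
   5%:R*a^+4*b*d + 10%:R*a^+3*b^+2*c + 3%:R*a^+3*c*d^+2 + 9%:R*a^+2*b*c^+2*d + 3%:R*a*b^+2*c^+3
     + 10%:R*a*c^+3*d^+2*t + 5%:R*b*c^+4*d*t ;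
   a^+5*d + 5%:R*a^+4*b*c + 3%:R*a^+3*c^+2*d + 3%:R*a^+2*b*c^+3 + 5%:R*a*c^+4*d*t + b*c^+5*t ;
   a^+5*c + a^+3*c^+3 + a*c^+5*t ].

Lemma act_poly_quintic (F : fieldType) (M : 'M[F]_2) (t : F) :
  act_poly M ('X^5 + 'X^3 + t *: 'X) = Poly (quintic_coefs t (M 0 0) (M 0 1) (M 1 0) (M 1 1)).
Proof.
by rewrite /act_poly !big_ord_recr big_ord0 /= !coefE /= !cons_poly_def -!mul_polyC; ring.
Qed.

Lemma quintic_PolyE (F : fieldType) (t : F) : 'X^5 + 'X^3 + t *: 'X = Poly [:: 0; t; 0; 1; 0; 1; 0].
Proof. by rewrite /= !cons_poly_def -!mul_polyC; ring. Qed.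

Definition quintic_aut_eqs (F : fieldType) (t a b c d : F) : Prop :=
  forall j, (quintic_coefs t a b c d)`_j = (a * d - b * c) ^+ 2 * [:: 0; t; 0; 1; 0; 1; 0]`_j.

Lemma quintic_aut_upper (F : fieldType) (t a b d : F) :
  a != 0 -> d != 0 -> quintic_aut_eqs t a b 0 d -> b = 0 /\ a * d = 1 /\ a ^+ 4 = 1.
Proof.
move=> an0 dn0 E.
move: (E 2%N) (E 3%N) (E 4%N) (E 5%N); rewrite /= ?mulr0 ?mulr1 => E2 E3 E4 E5.
have b0 : b = 0.
  have [//|bn0] := eqVneq b 0; exfalso.
  have h5 : 5%:R = 0 :> F.
    have f : 5%:R * (a ^+ 4 * b * d) = 0 by apply: (eq0_of_eq E4); ring.
    by apply: (mulf_eq0_left f); nonzero.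
  have f : (a ^+ 2 * b * d) * (2%:R * 5%:R * b ^+ 2 + 3%:R * d ^+ 2) = 0.
    by apply: (eq0_of_eq E2); ring.
  have h3 : 3%:R * d ^+ 2 = 0.
    by move: (mulf_eq0_right f); rewrite h5 mulr0 mul0r add0r; apply; nonzero.
  by apply: (natr3_natr5_eq0F (mulf_eq0_left h3 _) h5); nonzero.
subst b.
have had : a * d = 1.
  have f : (a * d) ^+ 2 * (a * d - 1) = 0 by apply: (eq0_of_eq E3); ring.
  by apply/eqP; rewrite -subr_eq0; apply/eqP; apply: (mulf_eq0_right f); nonzero.
have hd : d = a ^+ 3.
  have f : (a ^+ 2 * d) * (a ^+ 3 - d) = 0 by apply: (eq0_of_eq E5); ring.
  by apply/eqP; rewrite eq_sym -subr_eq0; apply/eqP; apply: (mulf_eq0_right f); nonzero.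
by split=> //; split=> //; rewrite -had hd; ring.
Qed.

Lemma quintic_aut_lower (F : fieldType) (t s b c d : F) :
  t != 0 -> s ^+ 4 = t -> b != 0 -> c != 0 -> quintic_aut_eqs t 0 b c d ->
  d = 0 /\ b * c = 1 /\ (c * s) ^+ 4 = 1.
Proof.
move=> tn0 hs bn0 cn0 E.
move: (E 2%N) (E 3%N) (E 4%N) (E 5%N); rewrite /= ?mulr0 ?mulr1 => E2 E3 E4 E5.
have d0 : d = 0.
  have [//|dn0] := eqVneq d 0; exfalso.
  have h5 : 5%:R = 0 :> F.
    have f : 5%:R * (b * c ^+ 4 * d * t) = 0 by apply: (eq0_of_eq E4); ring.
    by apply: (mulf_eq0_left f); nonzero.
  have f : (b * c ^+ 2 * d) * (3%:R * b ^+ 2 + 2%:R * 5%:R * d ^+ 2 * t) = 0.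
    by apply: (eq0_of_eq E2); ring.
  have h3 : 3%:R * b ^+ 2 = 0.
    by move: (mulf_eq0_right f); rewrite h5 mulr0 !mul0r addr0; apply; nonzero.
  by apply: (natr3_natr5_eq0F (mulf_eq0_left h3 _) h5); nonzero.
subst d.
have hbc : b * c = 1.
  have f : (b * c) ^+ 2 * (b * c - 1) = 0 by apply: (eq0_of_eq E3); ring.
  by apply/eqP; rewrite -subr_eq0; apply/eqP; apply: (mulf_eq0_right f); nonzero.
have hb : b = c ^+ 3 * t.
  have f : (b * c ^+ 2) * (c ^+ 3 * t - b) = 0 by apply: (eq0_of_eq E5); ring.
  by apply/eqP; rewrite eq_sym -subr_eq0; apply/eqP; apply: (mulf_eq0_right f); nonzero.
by split=> //; split=> //; rewrite exprMn hs -hbc hb; ring.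
Qed.

Lemma quintic_root_pair (F : fieldType) (t p u : F) :
  2%:R != 0 :> F -> p != 0 -> p != u ->
  p ^+ 4 + p ^+ 2 + t = 0 -> u ^+ 4 + u ^+ 2 + t = 0 ->
  10%:R * p^+2 * u^+3 + 3%:R * p^+2 * u + 5%:R * p * u^+4 + 9%:R * p * u^+2 + 5%:R * p * t
    + 3%:R * u^+3 + 10%:R * u * t = 0 ->
  5%:R * p^+4 * u + 10%:R * p^+3 * u^+2 + 3%:R * p^+3 + 9%:R * p^+2 * u + 3%:R * p * u^+2
    + 10%:R * p * t + 5%:R * u * t = 0 ->
  (4%:R * t - 1) * (100%:R * t - 9%:R) = 0.
Proof.
move=> h2 pn0 pu hp hu E2 E4.
have hsum : (u + p) * (u ^+ 2 + p ^+ 2 + 1) = 0.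
  have f : (u - p) * ((u + p) * (u ^+ 2 + p ^+ 2 + 1)) = 0.
    by apply: (eq0_of_eq (etrans hu (esym hp))); ring.
  by apply: (mulf_eq0_right f); rewrite subr_eq0 eq_sym.
have ht : t = - p ^+ 4 - p ^+ 2 by apply/eqP; rewrite -subr_eq0; apply/eqP; rewrite -hp; ring.
subst t.
have hm : u ^+ 2 + p ^+ 2 + 1 = 0.
  apply: (mulf_eq0_right hsum); apply/eqP => up.
  have f : 2%:R ^+ 3 * p ^+ 3 = 0.
    apply: (eq0_of_eq E2).
    by rewrite (_ : u = - p); [ring | apply/eqP; rewrite -subr_eq0 opprK up].
  by move: f; apply/eqP; nonzero.
have R1 : - 20%:R * p^+4 * u - 4%:R * p^+3 - 20%:R * p^+2 * u - 4%:R * p - 3%:R * u = 0.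
  pose k := 5%:R * p^+3 - 10%:R * p^+2 * u - 5%:R * p * u^+2 - 4%:R * p - 3%:R * u.
  by apply: (eq0_of_comb (j := 1) (k := k) E2 hm); rewrite /k; ring.
have R2 : - 20%:R * p^+5 - 20%:R * p^+3 + 4%:R * p^+2 * u - 3%:R * p = 0.
  by apply: (eq0_of_comb (j := 1) (k := - 10%:R * p^+3 - 3%:R * p) E4 hm); ring.
apply: (mulf_eq0_right _ pn0).
apply: (eq0_of_comb (j := 20%:R * (- p^+4 - p^+2) - 3%:R) (k := - 4%:R * p^+2) R2 R1).
ring.
Qed.

(* p = a/c and u = b/d are the images of the branch points infinity and 0, so they are roots
   of f/x = x^4 + x^2 + t; the cases d = 0 and b = 0 would force 3 = 5 = 0. *)
Lemma quintic_aut_generic (F : fieldType) (t a b c d : F) :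
  2%:R != 0 :> F -> t != 0 -> (4%:R * t - 1) * (100%:R * t - 9%:R) != 0 ->
  a != 0 -> c != 0 -> a * d - b * c != 0 -> quintic_aut_eqs t a b c d -> False.
Proof.
move=> h2 tn0 ht an0 cn0 hD E.
move: (E 0%N) (E 2%N) (E 4%N) (E 6%N); rewrite /= ?mulr0 ?mulr1 => E0 E2 E4 E6.
have [p ha] : exists p, a = p * c by exists (a / c); rewrite divfK.
subst a; have pn0 : p != 0 by apply: contraNneq an0 => ->; rewrite mul0r.
have hp : p ^+ 4 + p ^+ 2 + t = 0.
  have f : (c ^+ 6 * p) * (p ^+ 4 + p ^+ 2 + t) = 0 by apply: (eq0_of_eq E6); ring.
  by apply: (mulf_eq0_right f); nonzero.
have dn0 : d != 0.
  apply/eqP => d0; subst d; rewrite mulr0 sub0r oppr_eq0 in hD.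
  have bn0 : b != 0 by apply: contraNneq hD => ->; rewrite mul0r.
  have h5 : 5%:R = 0 :> F.
    have f : 5%:R * (p * c ^+ 2 * b ^+ 4) = 0 by apply: (eq0_of_eq E2); ring.
    by apply: (mulf_eq0_left f); nonzero.
  have f : (p * c ^+ 4 * b ^+ 2) * (2%:R * 5%:R * p ^+ 2 + 3%:R) = 0.
    by apply: (eq0_of_eq E4); ring.
  have h3 : 3%:R = 0 :> F.
    by move: (mulf_eq0_right f); rewrite h5 mulr0 !mul0r add0r; apply; nonzero.
  exact: natr3_natr5_eq0F h3 h5.
have [u hb] : exists u, b = u * d by exists (b / d); rewrite divfK.
subst b; have pu : p != u.
  by apply: contraNneq hD => ->; rewrite (_ : u * c * d = u * d * c) ?subrr //; ring.
have un0 : u != 0.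
  apply/eqP => u0; subst u.
  have h5 : 5%:R = 0 :> F.
    have f : 5%:R * (p * c ^+ 2 * d ^+ 4 * t) = 0 by apply: (eq0_of_eq E2); ring.
    by apply: (mulf_eq0_left f); nonzero.
  have f : (p * c ^+ 4 * d ^+ 2) * (3%:R * p ^+ 2 + 2%:R * 5%:R * t) = 0.
    by apply: (eq0_of_eq E4); ring.
  have h3 : 3%:R * p ^+ 2 = 0.
    by move: (mulf_eq0_right f); rewrite h5 mulr0 !mul0r addr0; apply; nonzero.
  by apply: (natr3_natr5_eq0F (mulf_eq0_left h3 _) h5); nonzero.
have hu : u ^+ 4 + u ^+ 2 + t = 0.
  have f : (d ^+ 6 * u) * (u ^+ 4 + u ^+ 2 + t) = 0 by apply: (eq0_of_eq E0); ring.
  by apply: (mulf_eq0_right f); nonzero.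
move/eqP: ht; apply; apply: (quintic_root_pair h2 pn0 pu hp hu).
- have f : (c ^+ 2 * d ^+ 4) * (10%:R * p^+2 * u^+3 + 3%:R * p^+2 * u + 5%:R * p * u^+4
      + 9%:R * p * u^+2 + 5%:R * p * t + 3%:R * u^+3 + 10%:R * u * t) = 0.
    by apply: (eq0_of_eq E2); ring.
  by apply: (mulf_eq0_right f); nonzero.
- have f : (c ^+ 4 * d ^+ 2) * (5%:R * p^+4 * u + 10%:R * p^+3 * u^+2 + 3%:R * p^+3
      + 9%:R * p^+2 * u + 3%:R * p * u^+2 + 10%:R * p * t + 5%:R * u * t) = 0.
    by apply: (eq0_of_eq E4); ring.
  by apply: (mulf_eq0_right f); nonzero.
Qed.

Lemma quintic_aut_classify (F : fieldType) (t s a b c d : F) :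
  2%:R != 0 :> F -> t != 0 -> (4%:R * t - 1) * (100%:R * t - 9%:R) != 0 -> s ^+ 4 = t ->
  a * d - b * c != 0 -> quintic_aut_eqs t a b c d -> dihedral_form 4 s (mk2 a b c d).
Proof.
move=> h2 tn0 ht hs hD E; rewrite /dihedral_form !mk2E.
have [c0|cn0] := eqVneq c 0.
  subst c; rewrite mulr0 subr0 mulf_eq0 negb_or in hD; case/andP: hD => an0 dn0.
  by have [-> [had ha]] := quintic_aut_upper an0 dn0 E; left.
have [a0|an0] := eqVneq a 0.
  subst a; rewrite mul0r sub0r oppr_eq0 mulf_eq0 negb_or in hD; case/andP: hD => bn0 _.
  by have [-> [hbc hc]] := quintic_aut_lower tn0 hs bn0 cn0 E; right.
by case: (quintic_aut_generic h2 tn0 ht an0 cn0 hD E).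
Qed.

Lemma quintic_aut_dihedral (F : fieldType) (t s a b c d : F) :
  s ^+ 4 = t -> dihedral_form 4 s (mk2 a b c d) -> quintic_aut_eqs t a b c d.
Proof.
rewrite /dihedral_form !mk2E => hs [[b0 [c0 [had ha4]]] | [a0 [d0 [hbc hc4]]]] j.
- subst b c.
  have hd4 : d ^+ 4 = 1 by rewrite -(mul1r (d ^+ 4)) -{1}ha4 -exprMn had expr1n.
  case: j => [|[|[|[|[|[|[|j]]]]]]] /=; rewrite ?nth_nil ?mulr0; try ring.
  + by transitivity ((a * d) * d ^+ 4 * t); [ring | rewrite had hd4; ring].
  + by transitivity ((a * d) ^+ 3); [ring | rewrite had; ring].
  + by transitivity ((a * d) * a ^+ 4); [ring | rewrite had ha4; ring].
- subst a d.
  have hct : c ^+ 4 * t = 1 by rewrite -hs -exprMn.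
  have hb4 : b ^+ 4 = t by rewrite -[b ^+ 4]mulr1 -hct mulrA -exprMn hbc expr1n mul1r.
  case: j => [|[|[|[|[|[|[|j]]]]]]] /=; rewrite ?nth_nil ?mulr0; try ring.
  + by transitivity ((b * c) * b ^+ 4); [ring | rewrite hbc hb4; ring].
  + by transitivity ((b * c) ^+ 3); [ring | rewrite hbc; ring].
  + by transitivity ((b * c) * (c ^+ 4 * t)); [ring | rewrite hbc hct; ring].
Qed.

Definition sextic_coefs (R : nzRingType) (t a b c d : R) : seq R :=
 [:: b^+6 + b^+3*d^+3 + d^+6*t ;
   6%:R*a*b^+5 + 3%:R*a*b^+2*d^+3 + 3%:R*b^+3*c*d^+2 + 6%:R*c*d^+5*t ;
   15%:R*a^+2*b^+4 + 3%:R*a^+2*b*d^+3 + 9%:R*a*b^+2*c*d^+2 + 3%:R*b^+3*c^+2*d + 15%:R*c^+2*d^+4*t ;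
   20%:R*a^+3*b^+3 + a^+3*d^+3 + 9%:R*a^+2*b*c*d^+2 + 9%:R*a*b^+2*c^+2*d + b^+3*c^+3
     + 20%:R*c^+3*d^+3*t ;
   15%:R*a^+4*b^+2 + 3%:R*a^+3*c*d^+2 + 9%:R*a^+2*b*c^+2*d + 3%:R*a*b^+2*c^+3 + 15%:R*c^+4*d^+2*t ;
   6%:R*a^+5*b + 3%:R*a^+3*c^+2*d + 3%:R*a^+2*b*c^+3 + 6%:R*c^+5*d*t ;
   a^+6 + a^+3*c^+3 + c^+6*t ].

Lemma act_poly_sextic (F : fieldType) (M : 'M[F]_2) (t : F) :
  act_poly M ('X^6 + 'X^3 + t%:P) = Poly (sextic_coefs t (M 0 0) (M 0 1) (M 1 0) (M 1 1)).
Proof.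
by rewrite /act_poly !big_ord_recr big_ord0 /= !coefE /= !cons_poly_def -!mul_polyC; ring.
Qed.

Lemma sextic_PolyE (F : fieldType) (t : F) : 'X^6 + 'X^3 + t%:P = Poly [:: t; 0; 0; 1; 0; 0; 1].
Proof. by rewrite /= !cons_poly_def; ring. Qed.

Definition sextic_aut_eqs (F : fieldType) (t a b c d : F) : Prop :=
  forall j, (sextic_coefs t a b c d)`_j = (a * d - b * c) ^+ 2 * [:: t; 0; 0; 1; 0; 0; 1]`_j.

Lemma sextic_aut_upper (F : fieldType) (t a b d : F) :
  6%:R != 0 :> F -> a != 0 -> d != 0 -> sextic_aut_eqs t a b 0 d ->
  b = 0 /\ a * d = 1 /\ a ^+ 6 = 1.
Proof.
move=> h6 an0 dn0 E.
move: (E 3%N) (E 5%N) (E 6%N); rewrite /= ?mulr0 ?mulr1 => E3 E5 E6.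
have b0 : b = 0.
  have f : (6%:R * a ^+ 5) * b = 0 by apply: (eq0_of_eq E5); ring.
  by apply: (mulf_eq0_right f); nonzero.
subst b.
have had : a * d = 1.
  have f : (a * d) ^+ 2 * (a * d - 1) = 0 by apply: (eq0_of_eq E3); ring.
  by apply/eqP; rewrite -subr_eq0; apply/eqP; apply: (mulf_eq0_right f); nonzero.
split=> //; split=> //.
by apply/eqP; rewrite -subr_eq0; apply/eqP; apply: (eq0_of_eq E6); rewrite had; ring.
Qed.

Lemma sextic_aut_lower (F : fieldType) (t s b c d : F) :
  6%:R != 0 :> F -> t != 0 -> s ^+ 6 = t -> b != 0 -> c != 0 -> sextic_aut_eqs t 0 b c d ->
  d = 0 /\ b * c = 1 /\ (c * s) ^+ 6 = 1.
Proof.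
move=> h6 tn0 hs bn0 cn0 E.
move: (E 3%N) (E 5%N) (E 6%N); rewrite /= ?mulr0 ?mulr1 => E3 E5 E6.
have d0 : d = 0.
  have f : (6%:R * c ^+ 5 * t) * d = 0 by apply: (eq0_of_eq E5); ring.
  by apply: (mulf_eq0_right f); nonzero.
subst d.
have hbc : b * c = 1.
  have f : (b * c) ^+ 2 * (b * c - 1) = 0 by apply: (eq0_of_eq E3); ring.
  by apply/eqP; rewrite -subr_eq0; apply/eqP; apply: (mulf_eq0_right f); nonzero.
split=> //; split=> //.
rewrite exprMn hs; apply/eqP; rewrite -subr_eq0; apply/eqP.
by apply: (eq0_of_eq E6); rewrite hbc; ring.
Qed.

Lemma sextic_resultant (R : comNzRingType) (t y : R) :
  4%:R * y^+2 + 20%:R * y * t - y + 4%:R * t = 0 ->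
  80%:R * y^+6 * t - 8%:R * y^+6 + 144%:R * y^+5 * t + 144%:R * y^+4 * t + 9%:R * y^+4
    + 48%:R * y^+3 * t^+2 + 104%:R * y^+3 * t + y^+3 + 144%:R * y^+2 * t^+2 + 9%:R * y^+2 * t
    + 144%:R * y * t^+3 + 80%:R * t^+4 - 8%:R * t^+3 = 0 ->
  2%:R ^+ 16 * 5%:R ^+ 4 * (t ^+ 3 * (4%:R * t - 1) ^+ 6 * (50%:R * t + 1) ^+ 2) = 0.
Proof.
move=> hQ hP.
(* [m] keeps the large integer coefficients of the certificate out of unary [nat]. *)
pose m : R := 1000%:R.
pose A := - 256%:R * m^+2 * t^+6 + (222%:R * m^+2 + 720%:R * m) * t^+5
  - (70%:R * m^+2 + 963%:R * m + 200%:R) * t^+4 + (9%:R * m^+2 + 689%:R * m + 600%:R) * t^+3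
  - 456%:R * m * t^+2 - (3%:R * m + 600%:R) * t + 200%:R.
pose B := - (51%:R * m^+2 + 200%:R * m) * t^+6 + (39%:R * m^+2 + 936%:R * m) * t^+5
  - (10%:R * m^+2 + 700%:R * m + 800%:R) * t^+4 + (m^+2 + 49%:R * m + 600%:R) * t^+3
  - (14%:R * m + 400%:R) * t^+2 - 800%:R * t.
have hAB : A * y + B = 0.
  apply: (eq0_of_comb (j := 4%:R ^+ 5) (k := - ((20%:R * m + 480%:R) * y^+4 * t
    - (2%:R * m + 48%:R) * y^+4 - (102%:R * m + 400%:R) * y^+3 * t^+2
    + (52%:R * m + 224%:R) * y^+3 * t - 512%:R * y^+3 + 512%:R * m * y^+2 * t^+3
    - (307%:R * m + 200%:R) * y^+2 * t^+2 + (54%:R * m + 528%:R) * y^+2 * t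
    + (2%:R * m + 176%:R) * y^+2 - (2%:R * m^+2 + 560%:R * m) * y * t^+4
    + (m^+2 + 766%:R * m + 400%:R) * y * t^+3 - (389%:R * m + 376%:R) * y * t^+2
    + (29%:R * m + 888%:R) * y * t + 800%:R * y + (12%:R * m^+2 + 800%:R * m) * t^+5
    - (9%:R * m^+2 + 984%:R * m) * t^+4 + (2%:R * m^+2 + 695%:R * m + 680%:R) * t^+3
    - (264%:R * m + 448%:R) * t^+2 + (3%:R * m + 600%:R) * t + 200%:R)) hP hQ).
  by rewrite /A /B /m; ring.
apply: (eq0_of_comb (j := A ^+ 2) (k := - (4%:R * A * y - 4%:R * B + (20%:R * t - 1) * A)) hQ hAB).
by rewrite /A /B /m; ring.
Qed.

Lemma sextic_generic_pair (F : fieldType) (t p b d : F) :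
  2%:R != 0 :> F -> 3%:R != 0 :> F -> t != 0 -> 4%:R * t - 1 != 0 -> 50%:R * t + 1 != 0 ->
  p != 0 -> d != 0 -> 2%:R * p ^+ 3 + 1 != 0 -> p ^+ 6 + p ^+ 3 + t != 0 ->
  p ^+ 2 * (2%:R * p ^+ 3 + 1) * b + (p ^+ 3 + 2%:R * t) * d = 0 ->
  15%:R * p^+4 * b^+2 + 3%:R * p^+3 * d^+2 + 9%:R * p^+2 * b * d + 3%:R * p * b^+2
    + 15%:R * d^+2 * t = 0 ->
  15%:R * p^+2 * b^+4 + 3%:R * p^+2 * b * d^+3 + 9%:R * p * b^+2 * d^+2 + 3%:R * b^+3 * d
    + 15%:R * d^+4 * t = 0 ->
  False.
Proof.
move=> h2 h3 tn0 ht4 ht50 pn0 dn0 hp2 hf hG E4 E2.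
(* Eliminate [b] through [W * b = - (p^3 + 2 t) d] and work with [y = p^3]. *)
pose W := p ^+ 2 * (2%:R * p ^+ 3 + 1).
have hWb : W * b = - ((p ^+ 3 + 2%:R * t) * d).
  by apply/eqP; rewrite -subr_eq0 opprK; apply/eqP.
have hQ : 4%:R * (p^+3)^+2 + 20%:R * p^+3 * t - p^+3 + 4%:R * t = 0.
  have h : W ^+ 2 * 0 = 15%:R * p ^+ 4 * (W * b) ^+ 2 + 3%:R * p ^+ 3 * W ^+ 2 * d ^+ 2
      + 9%:R * p ^+ 2 * (W * b) * (W * d) + 3%:R * p * (W * b) ^+ 2 + 15%:R * W ^+ 2 * d ^+ 2 * t.
    by rewrite -E4; ring.
  rewrite mulr0 hWb in h.
  have f : (d ^+ 2 * (3%:R * p * (p ^+ 6 + p ^+ 3 + t)))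
      * (4%:R * (p^+3)^+2 + 20%:R * p^+3 * t - p^+3 + 4%:R * t) = 0.
    by apply: (eq0_of_eq (esym h)); rewrite /W; ring.
  by apply: (mulf_eq0_right f); nonzero.
have h5 : 5%:R != 0 :> F.
  apply: contra_neq hf => h5.
  apply: (eq0_of_comb (j := - 1) (k := p ^+ 6 + 4%:R * t * p ^+ 3 + t) hQ h5); ring.
have hP : 80%:R * (p^+3)^+6 * t - 8%:R * (p^+3)^+6 + 144%:R * (p^+3)^+5 * t
    + 144%:R * (p^+3)^+4 * t + 9%:R * (p^+3)^+4 + 48%:R * (p^+3)^+3 * t^+2
    + 104%:R * (p^+3)^+3 * t + (p^+3)^+3 + 144%:R * (p^+3)^+2 * t^+2 + 9%:R * (p^+3)^+2 * t
    + 144%:R * p^+3 * t^+3 + 80%:R * t^+4 - 8%:R * t^+3 = 0.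
  have h : W ^+ 4 * 0 = 15%:R * p ^+ 2 * (W * b) ^+ 4 + 3%:R * p ^+ 2 * (W * b) * W ^+ 3 * d ^+ 3
      + 9%:R * p * (W * b) ^+ 2 * W ^+ 2 * d ^+ 2 + 3%:R * (W * b) ^+ 3 * W * d
      + 15%:R * W ^+ 4 * d ^+ 4 * t.
    by rewrite -E2; ring.
  rewrite mulr0 hWb in h.
  apply: (mulf_eq0_right (x := d ^+ 4 * (3%:R * p ^+ 2))); last by nonzero.
  by apply: (eq0_of_eq (esym h)); rewrite /W; ring.
by have := sextic_resultant hQ hP; apply/eqP; nonzero.
Qed.

Lemma sextic_aut_generic (F : fieldType) (t a b c d : F) :
  2%:R != 0 :> F -> 3%:R != 0 :> F -> t != 0 -> 4%:R * t - 1 != 0 -> 50%:R * t + 1 != 0 ->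
  a != 0 -> c != 0 -> a * d - b * c != 0 -> sextic_aut_eqs t a b c d -> False.
Proof.
move=> h2 h3 tn0 ht4 ht50 an0 cn0 hD E.
move: (E 2%N) (E 4%N) (E 5%N) (E 6%N); rewrite /= ?mulr0 ?mulr1 => E2 E4 E5 E6.
have [p ha] : exists p, a = p * c by exists (a / c); rewrite divfK.
subst a; have pn0 : p != 0 by apply: contraNneq an0 => ->; rewrite mul0r.
have hf : p ^+ 6 + p ^+ 3 + t != 0.
  apply: contraNneq hD => hf.
  have : (p * c * d - b * c) ^+ 2 = 0.
    by apply: (eq0_of_comb (j := - 1) (k := c ^+ 6) E6 hf); ring.
  by move/eqP; rewrite expf_eq0.
have hG : p ^+ 2 * (2%:R * p ^+ 3 + 1) * b + (p ^+ 3 + 2%:R * t) * d = 0.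
  apply: (mulf_eq0_right (x := 3%:R * c ^+ 5)); last by nonzero.
  by apply: (eq0_of_eq E5); ring.
have dn0 : d != 0.
  apply/eqP => d0; subst d; rewrite mulr0 sub0r oppr_eq0 in hD.
  have bn0 : b != 0 by apply: contraNneq hD => ->; rewrite mul0r.
  have h2p : 2%:R * p ^+ 3 + 1 = 0.
    apply: (mulf_eq0_right (x := p ^+ 2 * b)); last by nonzero.
    by apply: (eq0_of_eq hG); ring.
  have h5p : 5%:R * p ^+ 3 + 1 = 0.
    apply: (mulf_eq0_right (x := 3%:R * p * c ^+ 4 * b ^+ 2)); last by nonzero.
    by apply: (eq0_of_eq E4); ring.
  have : 3%:R * p ^+ 3 = 0 by apply: (eq0_of_comb (j := 1) (k := - 1) h5p h2p); ring.
  by apply/eqP; nonzero.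
have hp2 : 2%:R * p ^+ 3 + 1 != 0.
  apply: contra_neq ht4 => hp2.
  have hpt : p ^+ 3 + 2%:R * t = 0.
    apply: (mulf_eq0_left _ dn0).
    by apply: (eq0_of_comb (j := 1) (k := - p ^+ 2 * b) hG hp2); ring.
  by apply: (eq0_of_comb (j := 2%:R) (k := - 1) hpt hp2); ring.
apply: (sextic_generic_pair h2 h3 tn0 ht4 ht50 pn0 dn0 hp2 hf hG).
- apply: (mulf_eq0_right (x := c ^+ 4)); last by nonzero.
  by apply: (eq0_of_eq E4); ring.
- apply: (mulf_eq0_right (x := c ^+ 2)); last by nonzero.
  by apply: (eq0_of_eq E2); ring.
Qed.

Lemma sextic_aut_classify (F : fieldType) (t s a b c d : F) :
  2%:R != 0 :> F -> 3%:R != 0 :> F -> t != 0 -> 4%:R * t - 1 != 0 -> 50%:R * t + 1 != 0 ->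
  s ^+ 6 = t -> a * d - b * c != 0 -> sextic_aut_eqs t a b c d -> dihedral_form 6 s (mk2 a b c d).
Proof.
move=> h2 h3 tn0 ht4 ht50 hs hD E; rewrite /dihedral_form !mk2E.
have h6 : 6%:R != 0 :> F by rewrite (_ : 6%:R = 2%:R * 3%:R) ?mulf_neq0 //; ring.
have [c0|cn0] := eqVneq c 0.
  subst c; rewrite mulr0 subr0 mulf_eq0 negb_or in hD; case/andP: hD => an0 dn0.
  by have [-> [had ha]] := sextic_aut_upper h6 an0 dn0 E; left.
have [a0|an0] := eqVneq a 0.
  subst a; rewrite mul0r sub0r oppr_eq0 mulf_eq0 negb_or in hD; case/andP: hD => bn0 _.
  by have [-> [hbc hc]] := sextic_aut_lower h6 tn0 hs bn0 cn0 E; right.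
by case: (sextic_aut_generic h2 h3 tn0 ht4 ht50 an0 cn0 hD E).
Qed.

Lemma sextic_aut_dihedral (F : fieldType) (t s a b c d : F) :
  s ^+ 6 = t -> dihedral_form 6 s (mk2 a b c d) -> sextic_aut_eqs t a b c d.
Proof.
rewrite /dihedral_form !mk2E => hs [[b0 [c0 [had ha6]]] | [a0 [d0 [hbc hc6]]]] j.
- subst b c.
  have hd6 : d ^+ 6 = 1 by rewrite -(mul1r (d ^+ 6)) -{1}ha6 -exprMn had expr1n.
  case: j => [|[|[|[|[|[|[|j]]]]]]] /=; rewrite ?nth_nil ?mulr0; try ring.
  + by transitivity (d ^+ 6 * t); [ring | rewrite had hd6; ring].
  + by transitivity ((a * d) ^+ 3); [ring | rewrite had; ring].
  + by transitivity (a ^+ 6); [ring | rewrite had ha6; ring].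
- subst a d.
  have hct : c ^+ 6 * t = 1 by rewrite -hs -exprMn.
  have hb6 : b ^+ 6 = t by rewrite -[b ^+ 6]mulr1 -hct mulrA -exprMn hbc expr1n mul1r.
  case: j => [|[|[|[|[|[|[|j]]]]]]] /=; rewrite ?nth_nil ?mulr0; try ring.
  + by transitivity (b ^+ 6); [ring | rewrite hbc hb6; ring].
  + by transitivity ((b * c) ^+ 3); [ring | rewrite hbc; ring].
  + by transitivity (c ^+ 6 * t); [ring | rewrite hbc hct; ring].
Qed.

Lemma dihedral_form1 (F : fieldType) n (s : F) : dihedral_form n s 1.
Proof. by left; rewrite -mk2_1 !mk2E mulr1 expr1n. Qed.

Lemma dihedral_formM (F : fieldType) n (s : F) (M N : 'M[F]_2) :
  dihedral_form n s M -> dihedral_form n s N -> dihedral_form n s (M * N).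
Proof.
rewrite (mx2_eta M) (mx2_eta N) mul_mk2 /dihedral_form !mk2E.
move: (M 0 0) (M 0 1) (M 1 0) (M 1 1) (N 0 0) (N 0 1) (N 1 0) (N 1 1) => a b c d a' b' c' d'.
case=> [[-> [-> [had ha]]] | [-> [-> [hbc hc]]]];
  case=> [[-> [-> [had' ha']]] | [-> [-> [hbc' hc']]]];
  rewrite !mul0r !mulr0 !addr0 !add0r; [left | right | right | left]; do !split.
- by transitivity ((a * d) * (a' * d')); [ring | rewrite had had' mulr1].
- by rewrite exprMn ha ha' mulr1.
- by transitivity ((a * d) * (b' * c')); [ring | rewrite had hbc' mulr1].
- have hd : d ^+ n = 1 by rewrite -(mul1r (d ^+ n)) -{1}ha -exprMn had expr1n.
  by rewrite -mulrA exprMn hd hc' mul1r.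
- by transitivity ((b * c) * (a' * d')); [ring | rewrite hbc had' mulr1].
- by transitivity (((c * s) * a') ^+ n); [congr (_ ^+ n); ring | rewrite exprMn hc ha' mulr1].
- by transitivity ((b * c) * (b' * c')); [ring | rewrite hbc hbc' mulr1].
- transitivity ((b * c') ^+ n * (c * s) ^+ n); first by rewrite hc mulr1.
  rewrite -exprMn; transitivity (((b * c) * (c' * s)) ^+ n); first by congr (_ ^+ n); ring.
  by rewrite exprMn hbc hc' expr1n mul1r.
Qed.

(* The identity when b = 0, where the matrix is singular. *)
Definition antidiagGL (F : finFieldType) (b : F) : {'GL_2[F]} :=
  insubd (1%g : {'GL_2[F]}) (mk2 0 b b^-1 0).

Lemma antidiagGLE (F : finFieldType) (b : F) : b != 0 -> GLval (antidiagGL b) = mk2 0 b b^-1 0.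
Proof.
move=> bn0; rewrite /antidiagGL insubdK // unfold_in unitmxE det_mk2 unitfE.
by rewrite mul0r sub0r oppr_eq0 mulfV ?oner_neq0.
Qed.

Lemma GLval_inj (F : finFieldType) : injective (fun u : {'GL_2[F]} => GLval u).
Proof. exact: val_inj. Qed.

Lemma GLvalX (F : finFieldType) (u : {'GL_2[F]}) k : GLval (u ^+ k)%g = GLval u ^+ k.
Proof. by elim: k => [|k IH]; rewrite ?expg0 ?expr0 // expgS exprS GL_ME IH. Qed.

Lemma mk2_diagX (R : comNzRingType) (a d : R) k :
  mk2 a 0 0 d ^+ k = mk2 (a ^+ k) 0 0 (d ^+ k).
Proof.
elim: k => [|k IH]; first by rewrite !expr0 mk2_1.
by rewrite exprS IH mul_mk2 !exprS !mul0r !mulr0 !addr0 add0r.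
Qed.

Lemma order_antidiagGL (F : finFieldType) (b : F) : b != 0 -> #[antidiagGL b]%g = 2%N.
Proof.
move=> bn0; apply/eqP; rewrite eqn_leq order_gt1; apply/andP; split.
  apply: dvdn_leq => //; rewrite order_dvdn; apply/eqP; apply: GLval_inj.
  rewrite GLvalX antidiagGLE // expr2 mul_mk2 GL_1E -mk2_1.
  by rewrite !mul0r !mulr0 !addr0 !add0r mulfV ?mulVf.
apply/eqP => /(congr1 (fun u : {'GL_2[F]} => GLval u 0 0)).
by rewrite antidiagGLE // GL_1E -mk2_1 !mk2E => /eqP; rewrite eq_sym oner_eq0.
Qed.

Section DihedralFormGroup.

Variables (F : finFieldType) (n : nat) (s z : F) (A : {set {'GL_2[F]}}).
Hypotheses (n_gt1 : (1 < n)%N) (z_prim : n.-primitive_root z) (s_neq0 : s != 0).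
Hypothesis A_dihedral : forall u, u \in A <-> dihedral_form n s (GLval u).

Let x := antidiagGL s.
Let y := antidiagGL (s / z).
Let r := (x * y)%g.

Let z_neq0 : z != 0.
Proof. by rewrite (prim_root_eq0 z_prim) -lt0n ltnW. Qed.

Let sz_neq0 : s / z != 0.
Proof. by rewrite mulf_neq0 ?invr_eq0. Qed.

Lemma GLval_rotX k : GLval (r ^+ k)%g = mk2 (z ^+ k) 0 0 (z^-1 ^+ k).
Proof.
rewrite GLvalX GL_ME !antidiagGLE // mul_mk2 !mul0r !mulr0 !addr0 !add0r -mk2_diagX.
by rewrite invf_div mulrCA mulfV // mulr1 mulrA mulVf // mul1r.
Qed.

Lemma order_rot : #[r]%g = n.
Proof.
apply/eqP; rewrite eqn_dvd; apply/andP; split.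
  rewrite order_dvdn; apply/eqP; apply: GLval_inj.
  by rewrite GLval_rotX GL_1E -mk2_1 exprVn (prim_expr_order z_prim) invr1.
rewrite (prim_order_dvd z_prim).
move/(congr1 (fun u : {'GL_2[F]} => GLval u 0 0)): (expg_order r).
by rewrite GLval_rotX GL_1E -mk2_1 !mk2E => ->.
Qed.

Lemma antidiag_notin_rot : x \notin <[r]>%g.
Proof.
apply/cycleP => -[k /(congr1 (fun u : {'GL_2[F]} => GLval u 0 0))].
by rewrite antidiagGLE // GLval_rotX !mk2E => /eqP; rewrite eq_sym expf_eq0 (negPf z_neq0) andbF.
Qed.

Lemma antidiag_neq : x != y.
Proof.
have x2 : (x ^+ 2 = 1)%g by apply/eqP; rewrite -order_dvdn order_antidiagGL.
apply: contraTneq n_gt1 => xy; rewrite -order_rot /r -xy -[(x * x)%g]/(x ^+ 2)%g.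
by rewrite x2 order1.
Qed.

Lemma dihedral_form_group : group_set A.
Proof.
apply/group_setP; split; first by apply/A_dihedral; rewrite GL_1E; apply: dihedral_form1.
move=> u v /A_dihedral Hu /A_dihedral Hv; apply/A_dihedral; rewrite GL_ME.
exact: dihedral_formM.
Qed.

Lemma antidiag_in : x \in A.
Proof.
apply/A_dihedral; rewrite antidiagGLE //; right; rewrite !mk2E mulfV // mulVf // expr1n.
by do !split.
Qed.

Lemma antidiag_rot_in : y \in A.
Proof.
apply/A_dihedral; rewrite antidiagGLE //; right.
by rewrite !mk2E mulfV // invf_div divfK // (prim_expr_order z_prim); do !split.
Qed.

Let antidiag_inv : (x^-1 = x)%g.
Proof. by rewrite invg_expg order_antidiagGL. Qed.

Lemma dihedral_form_decomp u : u \in A -> u \in (<[r]> :|: x *: <[r]>)%g.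
Proof.
case/A_dihedral => [[b0 [c0 [had ha]]] | [a0 [d0 [hbc hc]]]]; rewrite inE; apply/orP.
  have [k hk] := prim_rootP z_prim ha.
  left; apply/cycleP; exists k; apply: GLval_inj.
  rewrite GLval_rotX (mx2_eta (GLval u)) b0 c0 hk; congr mk2.
  have an0 : GLval u 0 0 != 0 by rewrite hk expf_neq0.
  by rewrite exprVn -hk; apply: (mulfI an0); rewrite had mulfV.
have [k hk] := prim_rootP z_prim hc.
have cn0 : GLval u 1 0 != 0 by apply: contra_eq_neq hbc => ->; rewrite mulr0 eq_sym oner_neq0.
right; rewrite mem_lcoset antidiag_inv; apply/cycleP; exists k; apply: GLval_inj.
rewrite GL_ME antidiagGLE // GLval_rotX (mx2_eta (GLval u)) a0 d0 mul_mk2.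
rewrite !mul0r !mulr0 !addr0 !add0r mulrC -hk; congr mk2.
by rewrite exprVn -hk -[GLval u 0 1](mulfK cn0) hbc mul1r invfM mulrC.
Qed.

Lemma rot_coset_subG (G : {group {'GL_2[F]}}) :
  x \in G -> y \in G -> (<[r]> :|: x *: <[r]>)%g \subset G.
Proof.
move=> xG yG; have rG : r \in G by rewrite groupM.
rewrite subUset cycle_subG rG /=; apply/subsetP => u.
by rewrite mem_lcoset => /cycleP[k hk]; rewrite -(mulKVg x u) hk groupM ?groupX.
Qed.

Lemma dihedral_form_gen : A = <<[set x; y]>>%g.
Proof.
apply/eqP; rewrite eqEsubset (gen_subG _ (Group dihedral_form_group)) subUset !sub1set.
rewrite antidiag_in antidiag_rot_in !andbT.
apply: subset_trans (rot_coset_subG (G := <<[set x; y]>>%G) _ _).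
- by apply/subsetP => u; apply: dihedral_form_decomp.
- by rewrite mem_gen // !inE eqxx.
- by rewrite mem_gen // !inE eqxx orbT.
Qed.

Lemma card_dihedral_form : #|A| = n.*2.
Proof.
have -> : A = (<[r]> :|: x *: <[r]>)%g.
  apply/eqP; rewrite eqEsubset.
  rewrite (rot_coset_subG (G := Group dihedral_form_group)) ?antidiag_in ?antidiag_rot_in //.
  by rewrite andbT; apply/subsetP => u; apply: dihedral_form_decomp.
rewrite cardsU card_lcoset -orderE order_rot (_ : _ :&: _ = set0) ?cards0 ?subn0 ?addnn //.
apply/setP => u; rewrite !inE mem_lcoset; apply/negP => /andP[ru xu].
by apply: (negP antidiag_notin_rot); rewrite -groupV -(mulgK u x^-1%g) groupM ?groupV.
Qed.

Theorem dihedral_form_isog : A \isog 'D_(n.*2).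
Proof.
have := involutions_gen_dihedral (order_antidiagGL s_neq0) (order_antidiagGL sz_neq0) antidiag_neq.
by rewrite /= -dihedral_form_gen card_dihedral_form.
Qed.

End DihedralFormGroup.

Lemma natr_neq0_ndvd_card (F : finFieldType) p : prime p -> ~~ (p %| #|F|)%N -> p%:R != 0 :> F.
Proof.
move=> pp; apply: contra => /eqP p0.
have [q qp hq] := finPcharP F.
have eqp : q = p by apply/eqP; rewrite -dvdn_prime2 // (dvdn_pcharf hq) p0.
subst q; rewrite (card_pprimeChar hq).
case: (logn p #|F|) (card_pprimeChar hq) => [|m] hc; last by rewrite dvdn_exp.
by have := finNzRing_gt1 F; rewrite hc.
Qed.

Lemma exists_prim_root (F : finFieldType) m :
  (0 < m)%N -> (m %| #|F|.-1)%N -> exists z : F, m.-primitive_root z.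
Proof.
move=> m0 hm; have F1 := finNzRing_gt1 F.
have N0 : (0 < #|F|.-1)%N by rewrite -ltnS prednK // ltnW.
have : has #|F|.-1.-primitive_root (enum (predC1 (0 : F))).
  apply: has_prim_root => //.
  - apply/allP => x; rewrite mem_enum inE => xn0; rewrite unity_rootE.
    apply/eqP; apply: (mulIf xn0); rewrite -exprSr prednK ?expf_card ?mul1r //.
    exact: ltnW.
  - exact: enum_uniq.
  - by rewrite -cardE cardC1.
case/hasP => z _ pz.
by exists (z ^+ (#|F|.-1 %/ m)); apply: dvdn_prim_root.
Qed.

Lemma quintic_aut_setP (F : finFieldType) (t s : F) :
  2%:R != 0 :> F -> t != 0 -> (4%:R * t - 1) * (100%:R * t - 9%:R) != 0 -> s ^+ 4 = t ->
  forall u, u \in aut_set ('X^5 + 'X^3 + t *: 'X) <-> dihedral_form 4 s (GLval u).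
Proof.
move=> h2 tn0 ht hs u; have hD := GL_det u.
rewrite det_mx2 in hD; rewrite (mx2_eta (GLval u)); split.
  move/(aut_setP (act_poly_quintic _ _) (quintic_PolyE _)); rewrite det_mx2.
  exact: quintic_aut_classify.
move/(quintic_aut_dihedral hs) => E.
by apply/(aut_setP (act_poly_quintic _ _) (quintic_PolyE _)); rewrite det_mx2.
Qed.

Lemma sextic_aut_setP (F : finFieldType) (t s : F) :
  2%:R != 0 :> F -> 3%:R != 0 :> F -> t != 0 -> 4%:R * t - 1 != 0 -> 50%:R * t + 1 != 0 ->
  s ^+ 6 = t ->
  forall u, u \in aut_set ('X^6 + 'X^3 + t%:P) <-> dihedral_form 6 s (GLval u).
Proof.
move=> h2 h3 tn0 ht4 ht50 hs u; have hD := GL_det u.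
rewrite det_mx2 in hD; rewrite (mx2_eta (GLval u)); split.
  move/(aut_setP (act_poly_sextic _ _) (sextic_PolyE _)); rewrite det_mx2.
  exact: sextic_aut_classify.
move/(sextic_aut_dihedral hs) => E.
by apply/(aut_setP (act_poly_sextic _ _) (sextic_PolyE _)); rewrite det_mx2.
Qed.

Theorem aut_set_quintic_isog (F : finFieldType) (t : F) :
  odd #|F| -> t != 0 -> t != 4%:R^-1 -> t != 9%:R / 100%:R ->
  (4 %| #|F|.-1)%N -> (exists s : F, s ^+ 4 = t) ->
  (aut_set ('X^5 + 'X^3 + t *: 'X) \isog 'D_8)%g.
Proof.
move=> oddF tn0 ht4 ht9 h4 [s hs].
have h2 : 2%:R != 0 :> F by apply: natr_neq0_ndvd_card; rewrite ?dvdn2 ?oddF.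
have ht : (4%:R * t - 1) * (100%:R * t - 9%:R) != 0.
  rewrite mulf_neq0 // mulr_subr_neq0 ?div1r //.
    by left; rewrite (_ : 4%:R = 2%:R * 2%:R) ?mulf_neq0 //; ring.
  have [h100|] := eqVneq (100%:R : F) 0; [right | by left].
  apply/eqP => h9; have : (1 : F) = 100%:R - 11%:R * 9%:R by ring.
  by rewrite h100 h9 mulr0 subrr; apply/eqP; rewrite oner_eq0.
have sn0 : s != 0 by apply: contraNneq tn0 => s0; rewrite -hs s0 expr0n.
have [z z_prim] := exists_prim_root (isT : (0 < 4)%N) h4.
exact: dihedral_form_isog z_prim sn0 (quintic_aut_setP h2 tn0 ht hs).
Qed.

Theorem aut_set_sextic_isog (F : finFieldType) (t : F) :
  odd #|F| -> ~~ (3 %| #|F|)%N -> t != 0 -> t != 4%:R^-1 -> t != - 1 / 50%:R ->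
  (3 %| #|F|.-1)%N -> (exists s : F, s ^+ 6 = t) ->
  (aut_set ('X^6 + 'X^3 + t%:P) \isog 'D_12)%g.
Proof.
move=> oddF n3 tn0 ht4 ht50 h3 [s hs].
have h2' : 2%:R != 0 :> F by apply: natr_neq0_ndvd_card; rewrite ?dvdn2 ?oddF.
have h3' : 3%:R != 0 :> F by apply: natr_neq0_ndvd_card.
have ht4' : 4%:R * t - 1 != 0.
  by rewrite mulr_subr_neq0 ?div1r //; left; rewrite (_ : 4%:R = 2%:R * 2%:R) ?mulf_neq0 //; ring.
have ht50' : 50%:R * t + 1 != 0.
  have := @mulr_subr_neq0 _ 50%:R (- 1) t; rewrite opprK; apply=> //.
  by right; rewrite oppr_eq0 oner_neq0.
have sn0 : s != 0 by apply: contraNneq tn0 => s0; rewrite -hs s0 expr0n.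
have h6 : (6 %| #|F|.-1)%N.
  have F0 : (0 < #|F|)%N by apply/card_gt0P; exists 0.
  by rewrite (@Gauss_dvd 2 3) // h3 dvdn2 -oddS prednK // oddF.
have [z z_prim] := exists_prim_root (isT : (0 < 6)%N) h6.
exact: dihedral_form_isog z_prim sn0 (sextic_aut_setP h2' h3' tn0 ht4' ht50' hs).
Qed.

Theorem mainTheorem1 :
  (forall (F : finFieldType) (t : F),
      odd #|F| ->
      t != 0 -> t != 4%:R^-1 -> t != 9%:R / 100%:R ->
      (4 %| #|F|.-1)%N ->
      (exists s : F, s ^+ 4 = t) ->
      (aut_set ('X^5 + 'X^3 + t *: 'X : {poly F}) \isog 'D_8)%g)
  /\
  (forall (F : finFieldType) (t : F),
      odd #|F| -> ~~ (3 %| #|F|)%N ->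
      t != 0 -> t != 4%:R^-1 -> t != - 1 / 50%:R ->
      (3 %| #|F|.-1)%N ->
      (exists s : F, s ^+ 6 = t) ->
      (aut_set ('X^6 + 'X^3 + t%:P : {poly F}) \isog 'D_12)%g).
Proof. exact: (conj aut_set_quintic_isog aut_set_sextic_isog). Qed.
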